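(* Let $(\mathcal G,\Theta=[\cdot,\cdot,\cdot]_{\mathcal G})$ be a Lie triple system with $\mathcal G=\mathfrak g_1\oplus\mathfrak g_2$, let $H:\mathfrak g_2\to\mathfrak g_1$ be linear, and suppose both $((\mathcal G,\Theta),\mathfrak g_1,\mathfrak g_2)$ and its twisting $((\mathcal G,\Theta^H),\mathfrak g_1,\mathfrak g_2)$ are twilled Lie triple systems. Then $$[u,v,w]_H:=[u,v,w]_2+[H(u),v,w]_2+[u,H(v),w]_2+[u,v,H(w)]_2+[H(u),H(v),w]_2+[u,H(v),H(w)]_2+[H(u),v,H(w)]_2$$ for $u,v,w\in\mathfrak g_2$ defines a Lie triple system structure on $\mathfrak g_2$, where $[a,b,c]_2$ is the $\mathfrak g_2$-component of $[a,b,c]_{\mathcal G}$.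
   Context: All vector spaces are over a field of characteristic $0$. A Lie triple system is a vector space with a trilinear bracket satisfying $[x,x,y]=0$, $[x,y,z]+[y,z,x]+[z,x,y]=0$ and $[x,y,[z,w,t]]=[[x,y,z],w,t]+[z,[x,y,w],t]+[z,w,[x,y,t]]$. A twilled Lie triple system $((\mathcal G,\Theta),\mathfrak g_1,\mathfrak g_2)$ is a Lie triple system on $\mathcal G=\mathfrak g_1\oplus\mathfrak g_2$ for which $\mathfrak g_1$ and $\mathfrak g_2$ are subalgebras (closed under the bracket). Cochains: $C^p(\mathcal G,\mathcal G)=\mathrm{Hom}(\otimes^{2p+1}\mathcal G,\mathcal G)$, arguments $(\mathfrak X_1,\dots,\mathfrak X_p,x)$, $\mathfrak X_i=x_i\otimes y_i$; for $P\in C^p,Q\in C^q$, $(P\circ Q)(\mathfrak X_1,\dots,\mathfrak X_{p+q},x)=\sum_{k=1}^p(-1)^{(k-1)q}\sum_{\sigma\in\mathbb S(k-1,q)}(-1)^\sigma P(\mathfrak X_{\sigma(1)},\dots,\mathfrak X_{\sigma(k-1)},Q(\mathfrak X_{\sigma(k)},\dots,\mathfrak X_{\sigma(k+q-1)},x_{k+q})\otimes y_{k+q},\mathfrak X_{k+q+1},\dots,x)+\sum_{k=1}^p(-1)^{(k-1)q}\sum_{\sigma\in\mathbb S(k-1,q)}(-1)^\sigma P(\mathfrak X_{\sigma(1)},\dots,\mathfrak X_{\sigma(k-1)},x_{k+q}\otimes Q(\mathfrak X_{\sigma(k)},\dots,\mathfrak X_{\sigma(k+q-1)},y_{k+q}),\mathfrak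 X_{k+q+1},\dots,x)+\sum_{\sigma\in\mathbb S(p,q)}(-1)^\sigma P(\mathfrak X_{\sigma(1)},\dots,\mathfrak X_{\sigma(p)},Q(\mathfrak X_{\sigma(p+1)},\dots,\mathfrak X_{\sigma(p+q)},x))$ and $[P,Q]_{\mathsf{LTS}}=P\circ Q-(-1)^{pq}Q\circ P$. $\hat H(x,u)=(H(u),0)$, $X_{\hat H}(\cdot)=[\cdot,\hat H]_{\mathsf{LTS}}$, and the twisting is $\Theta^H=\sum_{k\ge0}\frac1{k!}X_{\hat H}^k(\Theta)$ (finite sum), again a Lie triple system bracket on $\mathcal G$. *)

From mathcomp Require Import all_boot all_order all_algebra.
Set Implicit Arguments. Unset Strict Implicit. Unset Printing Implicit Defensive.
Import GRing.Theory.
Local Open Scope ring_scope.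

Section LTSDefs.
Variable F : fieldType.

Definition trilinear (V : lmodType F) (t : V -> V -> V -> V) : Prop :=
  [/\ forall (a : F) x x' y z, t (a *: x + x') y z = a *: t x y z + t x' y z,
      forall (a : F) x y y' z, t x (a *: y + y') z = a *: t x y z + t x y' z &
      forall (a : F) x y z z', t x y (a *: z + z') = a *: t x y z + t x y z'].

Definition LTS (V : lmodType F) (t : V -> V -> V -> V) : Prop :=
  [/\ trilinear t,
      forall x y, t x x y = 0,
      forall x y z, t x y z + t y z x + t z x y = 0 &
      forall x y z w u,
        t x y (t z w u) = t (t x y z) w u + t z (t x y w) u + t z w (t x y u)].

(* twilled LTS on G = g1 (+) g2, modelled as the product V1 * V2 *)
Definition twilled (V1 V2 : lmodType F)
    (t : V1 * V2 -> V1 * V2 -> V1 * V2 -> V1 * V2) : Prop :=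
  [/\ LTS t,
      forall a b c : V1, (t (a, 0) (b, 0) (c, 0)).2 = 0 &
      forall u v w : V2, (t (0, u) (0, v) (0, w)).1 = 0].

Definition hatH (V1 V2 : lmodType F) (H : V2 -> V1) : V1 * V2 -> V1 * V2 :=
  fun p => (H p.2, 0).

(* X_{h}(P) = [P, h]_LTS for P in C^1, h in C^0, unfolded from the
   definition of the cochain composition (p = 1, q = 0):
   (P o h)(x,y,z) = P(h x,y,z) + P(x,h y,z) + P(x,y,h z),
   (h o P)(x,y,z) = h (P(x,y,z)),  [P,h] = P o h - h o P. *)
Definition XH (V : lmodType F) (h : V -> V) (P : V -> V -> V -> V) :
    V -> V -> V -> V :=
  fun x y z => P (h x) y z + P x (h y) z + P x y (h z) - h (P x y z).

(* twisting Theta^h = sum_k 1/k! X_h^k(Theta); for h = \hat H (h o h = 0)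
   all terms with k >= 5 vanish, so the sum is truncated at k < 5. *)
Definition twist (V : lmodType F) (h : V -> V) (t : V -> V -> V -> V) :
    V -> V -> V -> V :=
  fun x y z => \sum_(k < 5) (k`!%:R)^-1 *: iter k (XH h) t x y z.

Definition bracketH (V1 V2 : lmodType F)
    (t : V1 * V2 -> V1 * V2 -> V1 * V2 -> V1 * V2) (H : V2 -> V1) :
    V2 -> V2 -> V2 -> V2 :=
  fun u v w =>
    let i2 (x : V2) : V1 * V2 := (0, x) in
    let iH (x : V2) : V1 * V2 := (H x, 0) in
    let b (a b c : V1 * V2) := (t a b c).2 in
    b (i2 u) (i2 v) (i2 w) + b (iH u) (i2 v) (i2 w) + b (i2 u) (iH v) (i2 w)
    + b (i2 u) (i2 v) (iH w) + b (iH u) (iH v) (i2 w) + b (i2 u) (iH v) (iH w)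
    + b (iH u) (i2 v) (iH w).

End LTSDefs.

From mathcomp Require Import all_boot all_order all_algebra.
Set Implicit Arguments. Unset Strict Implicit. Unset Printing Implicit Defensive.
Import GRing.Theory.
Local Open Scope ring_scope.

(** Since [hatH H] squares to zero, the twisting series stops after four terms,
  and on arguments in [g2] the [g2]-component of [Theta^H] is exactly
  [[u,v,w]_H] (the term cubic in [H] lies in the subalgebra [g1]). As [g2] is a
  subalgebra of the Lie triple system [Theta^H], the restriction of [Theta^H]
  to [g2] is again a Lie triple system. *)

Lemma linear_map0 (F : fieldType) (U V : lmodType F) (f : U -> V) :
  (forall (a : F) x x', f (a *: x + x') = a *: f x + f x') -> f 0 = 0.
Proof.
move=> f_lin; have := f_lin 1 0 0.
by rewrite !scale1r addr0 -{1}[f 0]addr0 => /addrI.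
Qed.

Lemma trilinear0 (F : fieldType) (V : lmodType F) (t : V -> V -> V -> V) :
  trilinear t ->
  [/\ forall y z, t 0 y z = 0, forall x z, t x 0 z = 0 & forall x y, t x y 0 = 0].
Proof.
case=> t_linl t_linm t_linr; split=> [y z|x z|x y].
- exact: (linear_map0 (f := fun x => t x y z)).
- exact: (linear_map0 (f := fun y => t x y z)).
- exact: linear_map0.
Qed.

Lemma eq_LTS (F : fieldType) (V : lmodType F) (t t' : V -> V -> V -> V) :
  (forall x y z, t x y z = t' x y z) -> LTS t -> LTS t'.
Proof.
move=> eq_t [[t_linl t_linm t_linr] t_alt t_jac t_fund].
split; first split; move=> *; rewrite -!eq_t.
- exact: t_linl.
- exact: t_linm.
- exact: t_linr.
- exact: t_alt.
- exact: t_jac.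
- exact: t_fund.
Qed.

Definition leibniz (F : fieldType) (V : lmodType F) (h : V -> V)
    (P : V -> V -> V -> V) : V -> V -> V -> V :=
  fun x y z => P (h x) y z + P x (h y) z + P x y (h z).

Section SquareZero.
Variables (F : fieldType) (V : lmodType F) (h : V -> V).
Hypothesis hK : forall x, h (h x) = 0.
Variables (P : V -> V -> V -> V).
Hypothesis P_tri : trilinear P.

Lemma iter2_leibniz x y z :
  iter 2 (leibniz h) P x y z =
  (P (h x) (h y) z + P x (h y) (h z) + P (h x) y (h z)) *+ 2.
Proof.
have [P0l P0m P0r] := trilinear0 P_tri.
rewrite /= /leibniz !hK !P0l !P0m !P0r !addr0 !add0r mulr2n.
by rewrite !addrA [LHS](ACl (1*4*2*3*6*5)%AC).
Qed.

Lemma iter3_leibniz x y z :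
  iter 3 (leibniz h) P x y z = P (h x) (h y) (h z) *+ 6.
Proof.
have [P0l P0m P0r] := trilinear0 P_tri.
rewrite iterS {1}/leibniz !iter2_leibniz !hK !P0l !P0m !P0r !addr0 !add0r.
by rewrite -!mulrnDr.
Qed.

Lemma iter4_leibniz x y z : iter 4 (leibniz h) P x y z = 0.
Proof.
have [P0l P0m P0r] := trilinear0 P_tri.
by rewrite iterS {1}/leibniz !iter3_leibniz !hK !P0l !P0m !P0r !mul0rn !addr0.
Qed.

End SquareZero.

Lemma snd_iter_XH (F : fieldType) (V1 V2 : lmodType F) (h : V1 * V2 -> V1 * V2)
    (P : V1 * V2 -> V1 * V2 -> V1 * V2 -> V1 * V2) k x y z :
  (forall p, (h p).2 = 0) ->
  (iter k (XH h) P x y z).2 = (iter k (leibniz h) P x y z).2.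
Proof.
move=> h2; elim: k x y z => [//|k IH] x y z.
by rewrite !iterS /XH /leibniz /= !IH h2 subr0.
Qed.

Lemma snd_twist (F : fieldType) (V1 V2 : lmodType F) (h : V1 * V2 -> V1 * V2)
    (t : V1 * V2 -> V1 * V2 -> V1 * V2 -> V1 * V2) x y z :
  [pchar F] =i pred0 -> (forall p, h (h p) = 0) -> (forall p, (h p).2 = 0) ->
  trilinear t ->
  (twist h t x y z).2 =
  (t x y z + leibniz h t x y z
   + (t (h x) (h y) z + t x (h y) (h z) + t (h x) y (h z))
   + t (h x) (h y) (h z)).2.
Proof.
move=> /pcharf0P charF0 hK h2 t_tri.
rewrite /twist linear_sum; under eq_bigr => k _ do rewrite /= snd_iter_XH //.
rewrite -(big_mkord xpredT (fun k => (k`!%:R)^-1 *: (iter k (leibniz h) t x y z).2)).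
rewrite !big_nat_recr // big_geq // iter2_leibniz ?iter3_leibniz ?iter4_leibniz //.
rewrite -!scaler_nat /= !scalerA !mulVf ?charF0 // invr1 !scale1r add0r.
by rewrite [X in _ + X = _]scaler0 addr0.
Qed.

Lemma bracketH_twist (F : fieldType) (V1 V2 : lmodType F)
    (t : V1 * V2 -> V1 * V2 -> V1 * V2 -> V1 * V2) (H : {linear V2 -> V1}) u v w :
  [pchar F] =i pred0 -> twilled t ->
  bracketH t H u v w = (twist (hatH H) t (0, u) (0, v) (0, w)).2.
Proof.
move=> charF0 [[t_tri _ _ _] t_g1 _].
have hatHK p : hatH H (hatH H p) = 0 by rewrite /hatH raddf0.
rewrite snd_twist // /= t_g1 addr0 /bracketH /leibniz /hatH /=.
by rewrite !addrA.
Qed.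

Lemma LTS_snd_subsystem (F : fieldType) (V1 V2 : lmodType F)
    (t : V1 * V2 -> V1 * V2 -> V1 * V2 -> V1 * V2) :
  LTS t -> (forall u v w, (t (0, u) (0, v) (0, w)).1 = 0) ->
  LTS (fun u v w => (t (0, u) (0, v) (0, w)).2).
Proof.
move=> [[t_linl t_linm t_linr] t_alt t_jac t_fund] t_g2.
have in_g2 a u u' : ((0 : V1), a *: u + u') = a *: (0, u) + (0, u').
  by congr (_, _); rewrite /= scaler0 addr0.
have t_in_g2 u v w : ((0 : V1), (t (0, u) (0, v) (0, w)).2) = t (0, u) (0, v) (0, w).
  by move: (t_g2 u v w); case: (t _ _ _) => ? ? /= ->.
split; first split=> *.
- by rewrite in_g2 t_linl.
- by rewrite in_g2 t_linm.
- by rewrite in_g2 t_linr.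
- by move=> u v; rewrite t_alt.
- by move=> u v w; have /(congr1 snd) := t_jac (0, u) (0, v) (0, w).
- move=> u v w x y; rewrite !t_in_g2.
  by have /(congr1 snd) := t_fund (0, u) (0, v) (0, w) (0, x) (0, y).
Qed.

Theorem proposition4p7 (F : fieldType) (charF0 : [pchar F] =i pred0)
    (V1 V2 : lmodType F)
    (t : V1 * V2 -> V1 * V2 -> V1 * V2 -> V1 * V2)
    (H : {linear V2 -> V1}) :
  twilled t -> twilled (twist (hatH H) t) -> LTS (bracketH t H).
Proof.
move=> t_twilled [twist_LTS _ twist_g2].
apply: (eq_LTS _ (LTS_snd_subsystem twist_LTS twist_g2)) => u v w.
by rewrite (bracketH_twist H u v w charF0 t_twilled).
Qed.
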